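(* Let $0<\varepsilon\le 0.1$, let $\Box$ be a closed axis-parallel square of side length $\varepsilon$ with center $o$, and let $R\subseteq\Box$ be a nonempty circular domain. Then every ray emanating from $o$ intersects the boundary $\partial(R\oplus D)$ in exactly one point; consequently the map $\pi:\partial(R\oplus D)\to\mathbb{S}^1$, $\pi(p)=\overrightarrow{op}/\lVert\overrightarrow{op}\rVert$, is a homeomorphism.
   Context: A circular arc is a connected portion of a circle in $\mathbb{R}^2$ (segments included). A circular domain is a closed subset of $\mathbb{R}^2$ whose boundary consists of finitely many circular arcs intersecting only at their endpoints (finite point sets are also allowed). $D$ is the closed unit disk centered at the origin and $\oplus$ denotes Minkowski sum. *)

From HB Require Import structures.
From mathcomp Require Import all_boot all_order all_algebra.
From mathcomp Require Import all_classical all_reals all_analysis.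
Set Implicit Arguments. Unset Strict Implicit. Unset Printing Implicit Defensive.
Import Order.TTheory GRing.Theory Num.Theory numFieldNormedType.Exports.
Local Open Scope classical_set_scope.
Local Open Scope ring_scope.

Section Plane.
Variable R : realType.
Notation pt := (R * R)%type.

Definition padd (p q : pt) : pt := (p.1 + q.1, p.2 + q.2).
Definition psub (p q : pt) : pt := (p.1 - q.1, p.2 - q.2).
Definition pscale (t : R) (p : pt) : pt := (t * p.1, t * p.2).
Definition enorm (p : pt) : R := Num.sqrt (p.1 ^+ 2 + p.2 ^+ 2).

Definition unit_disk : set pt := [set p | enorm p <= 1].
Definition unit_circle : set pt := [set p | enorm p = 1].

Definition minkowski_sum (A B : set pt) : set pt :=
  [set p | exists a b, A a /\ B b /\ p = padd a b].

Definition boundary (A : set pt) : set pt := closure A `\` interior A.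

Definition square (o : pt) (eps : R) : set pt :=
  [set p | `|p.1 - o.1| <= eps / 2 /\ `|p.2 - o.2| <= eps / 2].

(* A segment [a,b] (a = b allowed, giving a
   single point, so that finite point sets are covered), or an arc of the circle
   of center c and radius r > 0 swept by angles t0 <= t <= t1 with
   t1 - t0 <= 2 pi. *)
Inductive arc :=
  | Seg of pt & pt
  | Circ of pt & R & R & R.

Definition arc_wf (A : arc) : Prop :=
  match A with
  | Seg _ _ => True
  | Circ _ r t0 t1 => 0 < r /\ t0 <= t1 /\ t1 - t0 <= 2 * pi
  end.

Definition arc_set (A : arc) : set pt :=
  match A with
  | Seg a b => [set p | exists2 t, 0 <= t <= 1 &
                         p = padd a (pscale t (psub b a))]
  | Circ c r t0 t1 => [set p | exists2 t, t0 <= t <= t1 &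
                         p = padd c (pscale r (cos t, sin t))]
  end.

Definition arc_endpoints (A : arc) : set pt :=
  match A with
  | Seg a b => [set a; b]
  | Circ c r t0 t1 => [set padd c (pscale r (cos t0, sin t0));
                          padd c (pscale r (cos t1, sin t1))]
  end.

Definition circular_domain (S : set pt) : Prop :=
  closed S /\
  exists (n : nat) (a : 'I_n -> arc),
    (forall i, arc_wf (a i)) /\
    boundary S = \bigcup_(i in [set: 'I_n]) arc_set (a i) /\
    (forall i j, i <> j ->
       arc_set (a i) `&` arc_set (a j) `<=` arc_endpoints (a i) `&` arc_endpoints (a j)).

Definition ray (o u : pt) : set pt := [set p | exists2 t, 0 <= t & p = padd o (pscale t u)].

Definition radial (o p : pt) : pt := pscale (enorm (psub p o))^-1 (psub p o).

End Plane.

From HB Require Import structures.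
From mathcomp Require Import all_boot all_order all_algebra.
From mathcomp Require Import all_classical all_reals all_analysis.
From mathcomp Require Import ring lra.
Set Implicit Arguments. Unset Strict Implicit. Unset Printing Implicit Defensive.
Import Order.TTheory GRing.Theory Num.Theory numFieldNormedType.Exports.
Local Open Scope classical_set_scope.
Local Open Scope ring_scope.

(* Write M = S ⊕ D for the domain S.  Since S is compact, M is closed and a
   point lies on ∂M exactly when its distance to S equals 1.  Every s in S is
   within distance < 1 of o, and then the distance to s along a ray from o is
   strictly increasing once it has reached 1.  Hence each ray meets ∂M at most
   once, and it does meet it at the supremum of the ray parameters that stay in
   M.  So π is a continuous bijection from the compact set ∂M onto the Hausdorff
   space S¹, hence a homeomorphism.  Only compactness of S and dist(o, S) < 1
   are used; the small square guarantees both. *)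

Lemma continuous_inverse_compact {T U : topologicalType} (K : set T) (C : set U)
    (f : T -> U) (g : U -> T) :
  hausdorff_space U -> compact K -> {within K, continuous f} ->
  (forall v, C v -> K (g v)) -> (forall v, C v -> f (g v) = v) ->
  (forall p, K p -> g (f p) = p) ->
  {within C, continuous g}.
Proof.
move=> hU cK cf gK fg gf; apply/continuous_closedP => W cW.
apply/closed_subspaceP; exists (f @` (K `&` W)).
  apply: compact_closed hU _; apply: continuous_compact; last exact: compact_closedI.
  exact: continuous_subspaceW cf.
apply/seteqP; split => v [Wv Cv]; split => //.
  by case: Wv => p [Kp Wp] <-; rewrite /preimage /from_subspace /= gf.
by exists (g v) => //; [split=> //; exact: gK | exact: fg].
Qed.

Section Plane.
Context {R : realType}.
Implicit Types (o p q s u v x y : R * R) (t d : R).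

Definition sqdist p q : R := (p.1 - q.1) ^+ 2 + (p.2 - q.2) ^+ 2.

Definition ray_at o u t : R * R := padd o (pscale t u).

Lemma ball_prodE x y d : ball x d y <-> `|x.1 - y.1| < d /\ `|x.2 - y.2| < d.
Proof. by rewrite /ball /= /prod_ball -!ball_normE. Qed.

Lemma sqdist_ge0 p q : 0 <= sqdist p q.
Proof. by rewrite addr_ge0 ?sqr_ge0. Qed.

Lemma sqdistC p q : sqdist p q = sqdist q p.
Proof. by rewrite /sqdist -(sqrrN (p.1 - q.1)) -(sqrrN (p.2 - q.2)) !opprB. Qed.

Lemma sqdist_gt0 p q : p <> q -> 0 < sqdist p q.
Proof.
move=> pq; rewrite lt_def sqdist_ge0 andbT; apply/eqP.
rewrite /sqdist => /eqP; rewrite paddr_eq0 ?sqr_ge0 // !sqrf_eq0 !subr_eq0.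
by case/andP => /eqP h1 /eqP h2; apply: pq; rewrite [p]surjective_pairing h1 h2 -surjective_pairing.
Qed.

Lemma sqdist_triangle p q s : sqdist p s <= 2 * (sqdist p q + sqdist q s).
Proof.
rewrite /sqdist.
have := sqr_ge0 (p.1 + s.1 - 2 * q.1); have := sqr_ge0 (p.2 + s.2 - 2 * q.2).
nra.
Qed.

Lemma sqdist_ray_at_center o u t : sqdist (ray_at o u t) o = t ^+ 2 * (u.1 ^+ 2 + u.2 ^+ 2).
Proof. by rewrite /sqdist /ray_at /padd /pscale /=; ring. Qed.

(* With [x - q] in the unit disk, the cross term is below [4 d] and the square
   term below [2 d]. *)
Lemma sqdist_perturb x y q d : sqdist x q <= 1 -> d <= 1 -> ball x d y ->
  sqdist y q < sqdist x q + 6 * d.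
Proof.
rewrite /sqdist => xq d1 /ball_prodE[].
have -> : y.1 - q.1 = (x.1 - q.1) - (x.1 - y.1) by ring.
have -> : y.2 - q.2 = (x.2 - q.2) - (x.2 - y.2) by ring.
move: xq; set a1 := x.1 - q.1; set a2 := x.2 - q.2.
set e1 := x.1 - y.1; set e2 := x.2 - y.2 => xq.
rewrite !ltr_norml => /andP[h1 h2] /andP[h3 h4].
have b1 : -1 <= a1 <= 1 by apply/andP; split; nra.
have b2 : -1 <= a2 <= 1 by apply/andP; split; nra.
case/andP: b1 => b1 b1'; case/andP: b2 => b2 b2'.
have c1 : - (a1 * e1) < d by nra.
have c2 : - (a2 * e2) < d by nra.
have f1 : e1 ^+ 2 < d by nra.
have f2 : e2 ^+ 2 < d by nra.
nra.
Qed.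

Lemma sqdist_ray_at_increasing o u s t t' : sqdist o s < 1 -> 0 <= t -> t < t' ->
  1 <= sqdist (ray_at o u t) s -> sqdist (ray_at o u t) s < sqdist (ray_at o u t') s.
Proof.
rewrite /sqdist /ray_at /padd /pscale /= => os t0 tt'.
set w1 := s.1 - o.1; set w2 := s.2 - o.2.
have E r : (o.1 + r * u.1 - s.1) ^+ 2 + (o.2 + r * u.2 - s.2) ^+ 2 =
    r ^+ 2 * (u.1 ^+ 2 + u.2 ^+ 2) - 2 * r * (u.1 * w1 + u.2 * w2) + (w1 ^+ 2 + w2 ^+ 2).
  by rewrite /w1 /w2; ring.
have ow : w1 ^+ 2 + w2 ^+ 2 < 1 by move: os; rewrite /w1 /w2; nra.
rewrite !E; set a := u.1 ^+ 2 + u.2 ^+ 2; set c := u.1 * w1 + u.2 * w2.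
have a0 : 0 <= a by rewrite /a addr_ge0 ?sqr_ge0.
(* If the ray were not yet moving away from s, its distance to s would be at
   most the distance from o to s. *)
move=> H; have ct : c < t * a.
  rewrite ltNge; apply/negP => ct.
  have : t ^+ 2 * a <= t * c by rewrite expr2 -mulrA ler_wpM2l.
  have : 0 <= t * c by apply: mulr_ge0 => //; nra.
  lra.
have : t * a <= t' * a by rewrite ler_wpM2r // ltW.
nra.
Qed.

Lemma sqdist_continuous q : continuous (sqdist ^~ q).
Proof.
have -> : sqdist ^~ q = fun p => (p.1 - q.1) * (p.1 - q.1) + (p.2 - q.2) * (p.2 - q.2).
  by apply/funext => p; rewrite /sqdist !expr2.
move=> p; have c1 : (fun x : R * R => x.1 - q.1) @ p --> p.1 - q.1.
  by apply: cvgB; [exact: cvg_fst | exact: cvg_cst].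
have c2 : (fun x : R * R => x.2 - q.2) @ p --> p.2 - q.2.
  by apply: cvgB; [exact: cvg_snd | exact: cvg_cst].
exact: cvgD (cvgM c1 c1) (cvgM c2 c2).
Qed.

Lemma ray_at_continuous o u : continuous (ray_at o u).
Proof.
have -> : ray_at o u = fun t => (o.1 + t * u.1, o.2 + t * u.2) by [].
move=> t; have c (a b : R) : (fun r : R => a + r * b) @ t --> a + t * b.
  by apply: cvgD; [exact: cvg_cst | apply: cvgM; [exact: cvg_id | exact: cvg_cst]].
exact: cvg_pair (c o.1 u.1) (c o.2 u.2).
Qed.

Lemma radial_continuous_at o p : p <> o -> {for p, continuous (radial o)}.
Proof.
move=> /sqdist_gt0 po.
have cn : {for p, continuous (fun q => (Num.sqrt (sqdist q o))^-1)}.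
  apply: cvgV; first by rewrite gt_eqF ?sqrtr_gt0.
  apply: continuous_comp; [exact: sqdist_continuous | exact: sqrt_continuous].
have c1 : (fun q : R * R => q.1 - o.1) @ p --> p.1 - o.1.
  by apply: cvgB; [exact: cvg_fst | exact: cvg_cst].
have c2 : (fun q : R * R => q.2 - o.2) @ p --> p.2 - o.2.
  by apply: cvgB; [exact: cvg_snd | exact: cvg_cst].
exact: cvg_pair (cvgM cn c1) (cvgM cn c2).
Qed.

Lemma ray_at_nbhs o u t (A : set (R * R)) : nbhs (ray_at o u t) A ->
  exists2 d : R, 0 < d & forall t', `|t - t'| < d -> A (ray_at o u t').
Proof.
move=> /(@ray_at_continuous o u t) /nbhs_ballP[d d0 H].
by exists d => // t' tt'; apply: H; rewrite -ball_normE.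
Qed.

Lemma enorm_pscale t v : enorm (pscale t v) = `|t| * enorm v.
Proof.
rewrite /enorm /pscale /= -sqrtr_sqr -sqrtrM ?sqr_ge0 //.
by congr Num.sqrt; ring.
Qed.

Lemma enorm_psub p q : enorm (psub p q) = Num.sqrt (sqdist p q).
Proof. by []. Qed.

Lemma unit_circle_neq0 v : unit_circle v -> v <> (0, 0).
Proof. by move=> + v0; rewrite v0 /unit_circle /enorm /= expr0n /= addr0 sqrtr0 => /eqP; rewrite eq_sym oner_eq0. Qed.

Lemma radial_unit_circle o p : p <> o -> unit_circle (radial o p).
Proof.
move=> /sqdist_gt0 po; rewrite /unit_circle /radial /= enorm_pscale enorm_psub.
by rewrite gtr0_norm ?invr_gt0 ?sqrtr_gt0 // mulVf // gt_eqF ?sqrtr_gt0.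
Qed.

Lemma radial_ray_at o v t : 0 < t -> unit_circle v -> radial o (ray_at o v t) = v.
Proof.
move=> t0 v1; rewrite /radial; have -> : psub (ray_at o v t) o = pscale t v.
  by rewrite /psub /ray_at /padd /pscale /=; congr pair; ring.
rewrite enorm_pscale v1 mulr1 gtr0_norm // /pscale /= !mulrA mulVf ?gt_eqF //.
by rewrite !mul1r -surjective_pairing.
Qed.

Lemma ray_at_radial o p : p <> o -> ray_at o (radial o p) (enorm (psub p o)) = p.
Proof.
move=> /sqdist_gt0 po; rewrite /ray_at /radial /padd /pscale /psub /= enorm_psub.
rewrite !mulrA mulfV ?gt_eqF ?sqrtr_gt0 // !mul1r !(addrC o.1) !(addrC o.2) !subrK.
by rewrite -surjective_pairing.
Qed.

End Plane.

Section MinkowskiUnitDisk.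
Context {R : realType} (S : set (R * R)).
Let M := minkowski_sum S (@unit_disk R).

Lemma minkowski_unit_diskP p : M p <-> exists2 s, S s & sqdist p s <= 1.
Proof.
have sqrt_le1 (x : R) : (Num.sqrt x <= 1) = (x <= 1) by rewrite -{1}sqrtr1 ler_sqrt.
split.
- move=> [s [b [Ss [Db ->]]]]; exists s => //.
  move: Db; rewrite /unit_disk /enorm /= sqrt_le1 /sqdist /padd /=.
  by rewrite !(addrC s.1) !(addrC s.2) !addrK.
- move=> [s Ss ps]; exists s, (psub p s); split => //; split.
    by rewrite /unit_disk /enorm /= sqrt_le1.
  by rewrite /padd /psub /= !(addrC s.1) !(addrC s.2) !subrK -surjective_pairing.
Qed.

Lemma interior_minkowski_unit_disk p s : S s -> sqdist p s < 1 -> interior M p.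
Proof.
move=> Ss ps; pose d := Num.min 1 ((1 - sqdist p s) / 6).
have d1 : d <= 1 by rewrite ge_min lexx.
have d2 : d <= (1 - sqdist p s) / 6 by rewrite ge_min lexx orbT.
apply/nbhs_ballP; exists d; first by rewrite /= lt_min ltr01 divr_gt0 // subr_gt0.
move=> y py; apply/minkowski_unit_diskP; exists s => //.
by have := sqdist_perturb (ltW ps) d1 py; lra.
Qed.

Lemma closed_minkowski_unit_disk : compact S -> closed M.
Proof.
move=> cS; apply/closure_id/seteqP; split => [p Mp|p Mp]; first exact: subset_closure.
have [? [/minkowski_unit_diskP[s0 Ss0 _] _]] := Mp _ filterT.
have [c /set_mem Sc cmin] := compact_EVT_min (ex_intro _ s0 Ss0) cS
  (continuous_subspaceT (@sqdist_continuous R p)).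
apply/minkowski_unit_diskP; exists c => //; rewrite sqdistC leNgt; apply/negP => pc.
pose d := Num.min 1 ((sqdist c p - 1) / 6).
have d0 : 0 < d by rewrite lt_min ltr01 divr_gt0 // subr_gt0.
have [y [/minkowski_unit_diskP[s Ss ys] /ball_sym py]] := Mp _ (nbhsx_ballx p d d0).
have d1 : d <= 1 by rewrite ge_min lexx.
have := sqdist_perturb ys d1 py.
have := cmin s (mem_set Ss); rewrite (sqdistC s).
have : d <= (sqdist c p - 1) / 6 by rewrite ge_min lexx orbT.
lra.
Qed.

End MinkowskiUnitDisk.

Section RayBoundary.
Context {R : realType} (o : R * R) (S : set (R * R)).
Hypotheses (cS : compact S) (S0 : S !=set0) (S_near_o : forall s, S s -> sqdist o s < 1).
Let M := minkowski_sum S (@unit_disk R).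
Let B := boundary M.

Lemma boundary_minkowski_unit_diskP p :
  B p <-> (exists2 s, S s & sqdist p s <= 1) /\ (forall s, S s -> 1 <= sqdist p s).
Proof.
have clM : M = closure M by apply/closure_id; exact: closed_minkowski_unit_disk.
rewrite /B /boundary -clM; split => -[/minkowski_unit_diskP Mp far]; split => //.
  move=> s Ss; rewrite leNgt; apply/negP => ps.
  exact: far (interior_minkowski_unit_disk Ss ps).
have po : ray_at o (psub p o) 1 = p.
  by rewrite /ray_at /padd /pscale /psub /= !mul1r !(addrC o.1) !(addrC o.2) !subrK -surjective_pairing.
rewrite /interior /= -{1}po => /ray_at_nbhs[d d0 near].
have /minkowski_unit_diskP[s Ss qs] : M (ray_at o (psub p o) (1 + d / 2)).
  by apply: near; rewrite opprD addNKr normrN gtr0_norm ?divr_gt0 //; lra.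
have d2 : 1 < 1 + d / 2 by rewrite ltrDl divr_gt0.
have := sqdist_ray_at_increasing (u := psub p o) (S_near_o Ss) ler01 d2.
by rewrite po; have := far s Ss; lra.
Qed.

Lemma center_notin_boundary : ~ B o.
Proof.
move=> /boundary_minkowski_unit_diskP[_ far]; have [s Ss] := S0.
by have := far s Ss; have := S_near_o Ss; lra.
Qed.

Lemma boundary_neq_center p : B p -> p <> o.
Proof. by move=> Bp po; apply: center_notin_boundary; rewrite -po. Qed.

Lemma ray_boundary_unique u t t' : 0 <= t -> 0 <= t' ->
  B (ray_at o u t) -> B (ray_at o u t') -> t = t'.
Proof.
have lt_false a b : 0 <= a -> a < b -> B (ray_at o u a) -> B (ray_at o u b) -> False.
  move=> a0 ab /boundary_minkowski_unit_diskP[_ far] /boundary_minkowski_unit_diskP[[s Ss bs] _].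
  have := sqdist_ray_at_increasing (u := u) (S_near_o Ss) a0 ab (far s Ss).
  by have := far s Ss; lra.
move=> t0 t'0 Bt Bt'; case: (ltgtP t t') => // tt'.
- by case: (lt_false _ _ t0 tt' Bt Bt').
- by case: (lt_false _ _ t'0 tt' Bt' Bt).
Qed.

Lemma minkowski_ray_bound u t : M (ray_at o u t) -> t ^+ 2 * (u.1 ^+ 2 + u.2 ^+ 2) <= 4.
Proof.
move=> /minkowski_unit_diskP[s Ss ts].
rewrite -(sqdist_ray_at_center o); have := sqdist_triangle (ray_at o u t) s o.
by rewrite (sqdistC s); have := S_near_o Ss; lra.
Qed.

Lemma ray_boundary_exists u : u <> (0, 0) -> exists2 t, 0 <= t & B (ray_at o u t).
Proof.
move=> /sqdist_gt0; rewrite /sqdist /= !subr0; set a := _ + _ => a0.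
pose T := [set t : R | 0 <= t /\ M (ray_at o u t)].
have T0 : T 0.
  split => //; have [s Ss] := S0; apply/minkowski_unit_diskP; exists s => //.
  have -> : ray_at o u 0 = o by rewrite /ray_at /padd /pscale /= !mul0r !addr0 -surjective_pairing.
  exact/ltW/S_near_o.
have T_ub t : T t -> t <= (a + 4) / a.
  move=> [t0 /minkowski_ray_bound]; rewrite -/a ler_pdivlMr // => ta.
  case: (leP t 1) => t1; first by nra.
  have : t * a <= t ^+ 2 * a by rewrite expr2 -mulrA ler_peMl ?mulr_ge0 // ltW.
  lra.
have supT : has_sup T by split; [exists 0 | exists ((a + 4) / a) => t /T_ub].
have le_sup t : T t -> t <= sup T by move=> Tt; exact: sup_upper_bound.
exists (sup T); first exact: le_sup.
apply/boundary_minkowski_unit_diskP; split.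
  have clM : closure M = M by apply/esym/closure_id; exact: closed_minkowski_unit_disk.
  suff : closure M (ray_at o u (sup T)) by rewrite clM => /minkowski_unit_diskP.
  move=> A /ray_at_nbhs[d d0 near]; have [t Tt tsup] := sup_adherent d0 supT.
  exists (ray_at o u t); split; first by case: Tt.
  by apply: near; rewrite ger0_norm ?subr_ge0 ?le_sup //; lra.
move=> s Ss; rewrite leNgt; apply/negP => /(interior_minkowski_unit_disk Ss).
move=> /ray_at_nbhs[d d0 near].
have : T (sup T + d / 2).
  split; first by have := le_sup _ T0; lra.
  by apply: near; rewrite opprD addNKr normrN gtr0_norm ?divr_gt0 //; lra.
by move/le_sup; lra.
Qed.

Lemma compact_boundary : compact B.
Proof.
have closedB : closed B by apply: closedI; [exact: closed_closure | exact/open_closedC/open_interior].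
have square := compact_setX (@segment_compact R (o.1 - 2) (o.1 + 2))
  (@segment_compact R (o.2 - 2) (o.2 + 2)).
apply: (subclosed_compact closedB square).
move=> p /boundary_minkowski_unit_diskP[[s Ss ps] _].
have : sqdist p o <= 4.
  by have := sqdist_triangle p s o; rewrite (sqdistC s); have := S_near_o Ss; lra.
rewrite /sqdist => po; have := sqr_ge0 (p.1 - o.1); have := sqr_ge0 (p.2 - o.2).
by move=> h1 h2; split; rewrite /= in_itv /=; apply/andP; split; nra.
Qed.

Lemma radial_continuous : {within B, continuous (radial o)}.
Proof.
apply: continuous_in_subspaceT => p /set_mem Bp.
exact/radial_continuous_at/boundary_neq_center.
Qed.

Definition boundary_point v := xget o (ray o v `&` B).

Lemma boundary_pointP v : v <> (0, 0) ->
  exists2 t, 0 <= t & boundary_point v = ray_at o v t /\ B (boundary_point v).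
Proof.
move=> /ray_boundary_exists[t t0 Bt].
have : (ray o v `&` B) (boundary_point v).
  by apply: xgetPex; exists (ray_at o v t); split => //; exists t.
by move=> [[t' t'0 ->] Bp]; exists t'.
Qed.

Lemma radial_boundary_point v : unit_circle v -> radial o (boundary_point v) = v.
Proof.
move=> v1; have [t t0 [gv Bg]] := boundary_pointP (unit_circle_neq0 v1).
rewrite gv radial_ray_at // lt_def t0 andbT; apply/eqP => t_eq0.
by apply: (boundary_neq_center Bg); rewrite gv t_eq0 /ray_at /padd /pscale /= !mul0r !addr0 -surjective_pairing.
Qed.

Lemma boundary_point_radial p : B p -> boundary_point (radial o p) = p.
Proof.
move=> Bp; have po := boundary_neq_center Bp.
have [t t0 [gv Bg]] := boundary_pointP (unit_circle_neq0 (radial_unit_circle po)).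
rewrite gv in Bg *; rewrite -[in RHS](ray_at_radial po) -[in B p](ray_at_radial po) in Bp *.
by congr ray_at; apply: ray_boundary_unique Bg Bp => //; rewrite enorm_psub sqrtr_ge0.
Qed.

Lemma boundary_point_continuous : {within @unit_circle R, continuous boundary_point}.
Proof.
apply: (continuous_inverse_compact _ compact_boundary radial_continuous).
- exact: norm_hausdorff.
- by move=> v v1; have [t _ []] := boundary_pointP (unit_circle_neq0 v1).
- by move=> v; exact: radial_boundary_point.
- by move=> p; exact: boundary_point_radial.
Qed.

End RayBoundary.

Lemma compact_subset_square {R : realType} (o : R * R) (eps : R) (S : set (R * R)) :
  closed S -> S `<=` square o eps -> compact S.
Proof.
move=> Sclosed Ssq; apply: (subclosed_compact Sclosed (compact_setX
  (@segment_compact R (o.1 - eps / 2) (o.1 + eps / 2))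
  (@segment_compact R (o.2 - eps / 2) (o.2 + eps / 2)))).
move=> s /Ssq[]; rewrite !ler_norml => /andP[? ?] /andP[? ?].
by split; rewrite /= in_itv /=; apply/andP; split; lra.
Qed.

Lemma square_sqdist_center_lt1 {R : realType} (o s : R * R) (eps : R) :
  eps <= 1 / 10 -> square o eps s -> sqdist o s < 1.
Proof.
move=> eps_small []; rewrite /sqdist !ler_norml => /andP[? ?] /andP[? ?].
have h1 : (o.1 - s.1) ^+ 2 <= 1 / 400 by nra.
have h2 : (o.2 - s.2) ^+ 2 <= 1 / 400 by nra.
lra.
Qed.

Theorem mainTheorem8 (R : realType) (eps : R) (o : R * R) (S : set (R * R)) :
  0 < eps -> eps <= 1 / 10 ->
  S `<=` square o eps -> S !=set0 -> circular_domain S ->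
  let B := boundary (minkowski_sum S (@unit_disk R)) in
  (forall u : R * R, u <> (0, 0) ->
     exists p, (ray o u `&` B) p /\ (forall q, (ray o u `&` B) q -> q = p)) /\
  (~ B o /\
   {within B, continuous (radial o)} /\
   (forall p, B p -> unit_circle (radial o p)) /\
   exists g : R * R -> R * R,
     {within @unit_circle R, continuous g} /\
     (forall v, unit_circle v -> B (g v)) /\
     (forall p, B p -> g (radial o p) = p) /\
     (forall v, unit_circle v -> radial o (g v) = v)).
Proof.
move=> _ eps_small Ssq S0 [Sclosed _] B.
have cS := compact_subset_square Sclosed Ssq.
have S_near_o s : S s -> sqdist o s < 1.
  by move=> /Ssq; exact: square_sqdist_center_lt1.
split.
  move=> u /(ray_boundary_exists cS S0 S_near_o)[t t0 Bt].
  exists (ray_at o u t); split; first by split => //; exists t.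
  by move=> q [[t' t'0 ->] Bq]; rewrite (ray_boundary_unique cS S_near_o t'0 t0 Bq Bt).
split; first exact: center_notin_boundary S0 S_near_o.
split; first exact: radial_continuous.
split; first by move=> p /(boundary_neq_center cS S0 S_near_o)/radial_unit_circle.
exists (boundary_point o S); split; first exact: boundary_point_continuous.
split; first by move=> v /unit_circle_neq0/(boundary_pointP cS S0 S_near_o)[t _ []].
split; first exact: boundary_point_radial.
exact: radial_boundary_point.
Qed.
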